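(* Let $s\in\mathbb{Z}$ and let $f$ be any active face of $\square_{\alpha_s}$. Then $g_{\alpha_s}(f)$ is an active face of $\square_{\alpha_{s+1}}$.
   Context: Fix $d\ge1$, $\lambda>0$, $\alpha_s=\lambda2^s$ ($s\in\mathbb{Z}$), and grids $G_{\alpha_s}\subset\mathbb{R}^d$ with $G_{\alpha_0}=\lambda\mathbb{Z}^d$ and $G_{\alpha_{s+1}}=2(G_{\alpha_s}-O_s)+O_s+\frac{\alpha_s}{2}\varepsilon_s$ for some $O_s\in G_{\alpha_s}$, $\varepsilon_s\in\{-1,1\}^d$. $\mathrm{Vor}_G(x)$ is the Voronoi cell of $x$ in grid $G$. $\square_{\alpha_s}$ is the cubical complex of faces $\prod_j[x_j,x_j+m_j]$, $x\in G_{\alpha_s}$, $m_j\in\{0,\alpha_s\}$; a facet of a $k$-face is a $(k-1)$-face contained in it. $g_{\alpha_s}$ maps a vertex $x$ to the unique $y\in G_{\alpha_{s+1}}$ with $x\in\mathrm{Vor}_{G_{\alpha_{s+1}}}(y)$, and a face to the convex hull of the images of its vertices (which is a face of $\square_{\alpha_{s+1}}$). Let $P\subset\mathbb{R}^d$ be finite; $a_{\alpha_s}(p)$ is the grid point of $G_{\alpha_s}$ whose Voronoi cell contains $p$ (assumed unique), and $V_{\alpha_s}:=a_{\alpha_s}(P)$ is the set of active vertices. A face $f$ of $\square_{\alpha_s}$ is spanned by $V\subseteq G_{\alpha_s}$ if $f\cap V$ is non-empty and not contained in any facet of $f$. The active faces of $\square_{\alpha_s}$ are the faces spanned by $V_{\alpha_s}$.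 *)

From HB Require Import structures.
From mathcomp Require Import all_boot all_order all_algebra.
From mathcomp Require Import classical_sets reals.
Set Implicit Arguments.
Unset Strict Implicit.
Unset Printing Implicit Defensive.
Import Order.TTheory GRing.Theory Num.Theory.
Local Open Scope ring_scope.
Local Open Scope classical_set_scope.

Section Defs.
Variables (R : realType) (d : nat).
Notation pt := 'rV[R]_d.

Definition alpha (lam : R) (s : int) : R := lam * (2%:R : R) ^ s.

Definition sqdist (p q : pt) : R := \sum_(j < d) (p ord0 j - q ord0 j) ^+ 2.

Definition vor (G : set pt) (x : pt) : set pt :=
  [set p | forall y, G y -> sqdist p x <= sqdist p y].

Definition lattice (lam : R) : set pt :=
  [set x | forall j, exists k : int, x ord0 j = lam * k%:~R].

Definition box (a : R) (x : pt) (b : 'I_d -> bool) : set pt :=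
  [set p | forall j, x ord0 j <= p ord0 j <= x ord0 j + (if b j then a else 0)].

Definition bdim (b : 'I_d -> bool) : nat := #|[pred j | b j]|.

Definition cube_face (G : set pt) (a : R) (F : set pt) : Prop :=
  exists x b, G x /\ F = box a x b.

Definition facet_of (G : set pt) (a : R) (F' F : set pt) : Prop :=
  exists x b x' b', [/\ G x /\ G x', F = box a x b, F' = box a x' b',
                        F' `<=` F & (bdim b' + 1)%N = bdim b].

Definition spanned (G : set pt) (a : R) (V F : set pt) : Prop :=
  F `&` V !=set0 /\ forall F', facet_of G a F' F -> ~ (F `&` V `<=` F').

Definition active_vertices (G : set pt) (P : seq pt) : set pt :=
  [set y | G y /\ exists2 p, p \in P & vor G y p].

Definition active_face (G : set pt) (a : R) (P : seq pt) (F : set pt) : Prop :=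
  cube_face G a F /\ spanned G a (active_vertices G P) F.

Definition convex_set (C : set pt) : Prop :=
  forall x y (t : R), C x -> C y -> 0 <= t <= 1 -> C ((1 - t) *: x + t *: y).

Definition conv (A : set pt) : set pt :=
  [set p | forall C, convex_set C -> A `<=` C -> C p].

(* g applied to a face F of the complex of G: the convex hull of the images
   of its vertices (= F `&` G); the image of a vertex x is the point y of G'
   whose Voronoi cell (in G') contains x. *)
Definition gface (G G' : set pt) (F : set pt) : set pt :=
  conv [set y | G' y /\ exists2 x, (F `&` G) x & vor G' y x].

Definition grid_step (G G' : set pt) (a : R) : Prop :=
  exists O (eps : pt), [/\ G O, (forall j, eps ord0 j = 1 \/ eps ord0 j = -1) &
    G' = [set (2%:R *: (x - O) + O + (a / 2%:R) *: eps) | x in G]].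

End Defs.

From HB Require Import structures.
From mathcomp Require Import all_boot all_order all_algebra.
From mathcomp Require Import boolp classical_sets reals.
From mathcomp Require Import zify ring lra.
Import Order.TTheory GRing.Theory Num.Theory.
Local Open Scope ring_scope.
Local Open Scope classical_set_scope.
Set Implicit Arguments.
Unset Strict Implicit.

(* Every grid G_{alpha_s} is a translate c + alpha_s Z^d, and G_{alpha_{s+1}} is
   offset from it by alpha_s / 2 in every coordinate.  Hence each coordinate of a
   fine grid point is at distance exactly alpha_s / 2 from a unique coarse
   coordinate, so g acts coordinatewise: the two ends of a fine edge go either to
   one coarse point or to the two ends of a coarse edge, and the coarse Voronoi
   cell of g(v) contains the fine Voronoi cell of v, so g maps active vertices to
   active vertices.  Finally, a vertex set spans a face of the cubical complex iff
   it meets every facet of it, and this property is transported coordinatewise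
   from f to g(f). *)

Section Line.
Variable R : realType.
Implicit Types (a c e o u v w x : R) (b : bool).

Definition on_line c a u := exists k : int, u = c + a * k%:~R.

Definition close e x y := x - y <= e /\ y - x <= e.

Definition seg_vertex a x b u := u = x \/ (b /\ u = x + a).

Lemma int_between (z lo hi : int) :
  lo%:~R - 1 < z%:~R :> R -> z%:~R < hi%:~R + 1 :> R -> (lo <= z <= hi)%R.
Proof.
rewrite -[1]/(1%:~R) -!intrB -!intrD !ltr_int; lia.
Qed.

Lemma on_line_diff c a u v :
  on_line c a u -> on_line c a v -> exists n : int, v - u = a * n%:~R.
Proof. by move=> [k ->] [k' ->]; exists (k' - k); rewrite intrB; ring. Qed.

Lemma on_lineDr c a u : on_line c a u -> on_line c a (u + a).
Proof. by move=> [k ->]; exists (k + 1); rewrite intrD; ring. Qed.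

Lemma on_lineBr c a u : on_line c a u -> on_line c a (u - a).
Proof. by move=> [k ->]; exists (k - 1); rewrite intrB; ring. Qed.

Lemma seg_vertex_on_line c a x b u :
  on_line c a x -> seg_vertex a x b u -> on_line c a u.
Proof. by move=> hx [->|[_ ->]] //; apply: on_lineDr. Qed.

Lemma seg_vertex_bounds a x b u : 0 < a -> seg_vertex a x b u ->
  x <= u <= x + (if b then a else 0).
Proof. by move=> a0 [->|[-> ->]]; [case: b|]; apply/andP; split; lra. Qed.

Lemma on_line_seg_vertex c a x b u : 0 < a -> on_line c a x -> on_line c a u ->
  x <= u <= x + (if b then a else 0) -> seg_vertex a x b u.
Proof.
move=> a0 hx hu /andP [lo hi]; have [n hn] := on_line_diff hx hu.
have n01 : (0 <= n <= 1)%R by apply: int_between; case: b hi => hi /=; nra.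
have [n0|n1] : n = 0 \/ n = 1 by lia.
- by left; move: hn; rewrite n0 mulr0; lra.
- by right; move: hn hi; rewrite n1 mulr1; case: b => hn hi; [split|]; lra.
Qed.

Lemma on_line_close_sqr c a y z p : 0 < a -> on_line c a y -> on_line c a z ->
  close (a / 2) p y -> (p - y) ^+ 2 <= (p - z) ^+ 2.
Proof.
move=> a0 hy hz [c1 c2]; have [n hn] := on_line_diff hy hz.
have [n0|[n1|n1]] : n = 0 \/ (1 <= n)%R \/ (n <= -1)%R by lia.
- by have -> : z = y by move: hn; rewrite n0 mulr0; lra.
- have : 1 <= n%:~R :> R by rewrite ler1z.
  have -> : p - z = p - y - a * n%:~R by lra.
  move=> hn1; have : a <= a * n%:~R by nra.
  rewrite !expr2; nra.
- have : n%:~R <= -1 :> R by rewrite -mulrN1z ler_int.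
  have -> : p - z = p - y - a * n%:~R by lra.
  move=> hn1; have : a * n%:~R <= - a by nra.
  rewrite !expr2; nra.
Qed.

Lemma sqr_le_neighbours_close a y p : 0 < a ->
  (p - y) ^+ 2 <= (p - (y + a)) ^+ 2 -> (p - y) ^+ 2 <= (p - (y - a)) ^+ 2 ->
  close (a / 2) p y.
Proof. by rewrite !expr2 => a0 h1 h2; split; nra. Qed.

Section Coarse.
Variables (o a e : R).

Notation fine := (on_line o a).
Notation coarse := (on_line (o + a / 2 * e) (2 * a)).

Lemma half_odd_int (t : int) : (e = 1 \/ e = -1) -> -1 <= t%:~R - e / 2 <= 1 ->
  t%:~R - e / 2 = 1 / 2 \/ t%:~R - e / 2 = - (1 / 2).
Proof.
case=> ee /andP [lo hi]; rewrite ee in lo hi *.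
- have t01 : (0 <= t <= 1)%R by apply: int_between; rewrite ?mulr0z ?mulr1z; lra.
  have [->|->] : t = 0 \/ t = 1 by lia.
  + by rewrite mulr0z; right; lra.
  + by rewrite mulr1z; left; lra.
- have t01 : (-1 <= t <= 0)%R by apply: int_between; rewrite ?mulr0z ?mulrN1z; lra.
  have [->|->] : t = -1 \/ t = 0 by lia.
  + by rewrite mulrN1z; right; lra.
  + by rewrite mulr0z; left; lra.
Qed.

(* Fine points are o + a k and coarse points o + a (2 m + e / 2), so their
   differences are a times a half-odd integer. *)
Lemma coarse_dist_half u w : 0 < a -> (e = 1 \/ e = -1) ->
  fine u -> coarse w -> close a u w ->
  u - w = a / 2 \/ u - w = - (a / 2).
Proof.
move=> a0 he [k ->] [m ->] [c1 c2].
have diffE : o + a * k%:~R - (o + a / 2 * e + 2 * a * m%:~R) =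
             a * ((k - (m + m))%:~R - e / 2) by rewrite intrB intrD; ring.
have {c2} c2 : - (a * ((k - (m + m))%:~R - e / 2)) <= a by rewrite -diffE; lra.
rewrite diffE in c1 *.
have : -1 <= (k - (m + m))%:~R - e / 2 <= 1 by apply/andP; split; nra.
by case/(half_odd_int he) => ->; [left|right]; field.
Qed.

Lemma coarse_unique u w w' : 0 < a -> (e = 1 \/ e = -1) -> fine u ->
  coarse w -> coarse w' -> close a u w -> close a u w' -> w' = w.
Proof.
move=> a0 he hu hw hw' c c'.
have h := coarse_dist_half a0 he hu hw c.
have h' := coarse_dist_half a0 he hu hw' c'.
have [n hn] := on_line_diff hw hw'.
have n00 : (0 <= n <= 0)%R by apply: int_between; rewrite mulr0z; case: h; case: h'; nra.
have n0 : n = 0 by lia.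
by move: hn; rewrite n0 mulr0z mulr0; lra.
Qed.

Lemma coarse_succ u w w' : 0 < a -> (e = 1 \/ e = -1) -> fine u ->
  coarse w -> coarse w' -> close a u w -> close a (u + a) w' ->
  w' = w \/ w' = w + 2 * a.
Proof.
move=> a0 he hu hw hw' c c'.
have h := coarse_dist_half a0 he hu hw c.
have h' := coarse_dist_half a0 he (on_lineDr hu) hw' c'.
have [n hn] := on_line_diff hw hw'.
have n01 : (0 <= n <= 1)%R.
  by apply: int_between; rewrite ?mulr0z ?mulr1z; case: h; case: h'; nra.
have [n0|n1] : n = 0 \/ n = 1 by lia.
- by left; move: hn; rewrite n0 mulr0z mulr0; lra.
- by right; move: hn; rewrite n1 mulr1z mulr1; lra.
Qed.

Lemma coarse_exists u : 0 < a -> (e = 1 \/ e = -1) -> fine u ->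
  exists2 w, coarse w & close (a / 2) u w.
Proof.
move=> a0 he [k ->].
(* n is k or k + 1, chosen so that rounding n down to an even number 2 m gives
   the coarse point o + a / 2 * e + 2 a m nearest to u. *)
have [n hn] : exists n : int, n%:~R = k%:~R + (1 - e) / 2 :> R.
  by case: he => ->; [exists k | exists (k + 1); rewrite intrD]; lra.
exists (o + a / 2 * e + 2 * a * (n %/ 2)%Z%:~R); first by exists (n %/ 2)%Z.
have ndiv : n%:~R = (n %/ 2)%Z%:~R * 2 + (n %% 2)%Z%:~R :> R.
  by rewrite {1}(divz_eq n 2) intrD intrM.
have [r0|r1] : (n %% 2 = 0 \/ n %% 2 = 1)%Z.
  have := modz_ge0 n (isT : (2 : int) != 0).
  by have := ltz_pmod n (isT : (0 : int) < 2); lia.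
all: have hk : k%:~R = 2 * (n %/ 2)%Z%:~R + (n %% 2)%Z%:~R - (1 - e) / 2 :> R by lra.
all: rewrite hk; move: hk; rewrite ?r0 ?r1 ?mulr0z ?mulr1z => _; split; lra.
Qed.

Definition seg_image x b w := coarse w /\ exists2 u, seg_vertex a x b u & close a u w.

Lemma seg_image_seg x b : 0 < a -> (e = 1 \/ e = -1) -> fine x ->
  exists y (b' : bool), forall w, seg_image x b w <-> seg_vertex (2 * a) y b' w.
Proof.
move=> a0 he hx.
have half_close u w : close (a / 2) u w -> close a u w by case; split; lra.
have [w0 cw0 /half_close hw0] := coarse_exists a0 he hx.
have img0 w : coarse w -> close a x w -> w = w0.
  by move=> cw hw; apply: coarse_unique a0 he hx cw0 cw hw0 hw.
have [w1 cw1 /half_close hw1] := coarse_exists a0 he (on_lineDr hx).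
have img1 w : coarse w -> close a (x + a) w -> w = w1.
  by move=> cw hw; apply: coarse_unique a0 he (on_lineDr hx) cw1 cw hw1 hw.
have [w10|w12] := coarse_succ a0 he hx cw0 cw1 hw0 hw1.
- exists w0, false => w; split.
  + move=> [cw [u [->|[_ ->]] hw]]; first by left; apply: img0.
    by left; rewrite -w10; apply: img1.
  + by case=> [->|[]] //; split=> //; exists x => //; left.
- exists w0, b => w; split.
  + move=> [cw [u [->|[bb ->]] hw]]; first by left; apply: img0.
    by right; split=> //; rewrite -w12; apply: img1.
  + case=> [->|[bb ->]]; first by split=> //; exists x => //; left.
    by rewrite -w12; split=> //; exists (x + a) => //; right.
Qed.

End Coarse.
End Line.

Section Lattice.
Variables (R : realType) (d : nat).
Notation pt := 'rV[R]_d.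
Implicit Types (a : R) (c p q v w x y : pt) (b : 'I_d -> bool).

Definition lat c a : set pt := [set p | forall j, on_line (c ord0 j) a (p ord0 j)].

Definition box_vertex a x b : set pt :=
  [set p | forall j, seg_vertex a (x ord0 j) (b j) (p ord0 j)].

Definition set_coord q j (t : R) : pt := \row_i (if i == j then t else q ord0 i).

Lemma set_coordE q j t i : set_coord q j t ord0 i = if i == j then t else q ord0 i.
Proof. by rewrite mxE. Qed.

Lemma lat_set_coord c a q j t :
  lat c a q -> on_line (c ord0 j) a t -> lat c a (set_coord q j t).
Proof. by move=> hq ht i; rewrite set_coordE; case: eqP => [->|]. Qed.

Lemma sqdist_split p q j : sqdist p q =
  (p ord0 j - q ord0 j) ^+ 2 + \sum_(i < d | i != j) (p ord0 i - q ord0 i) ^+ 2.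
Proof. by rewrite /sqdist (bigD1 j). Qed.

Lemma sqdist_set_coord p q j t : sqdist p (set_coord q j t) =
  sqdist p q - (p ord0 j - q ord0 j) ^+ 2 + (p ord0 j - t) ^+ 2.
Proof.
rewrite !(sqdist_split _ _ j) set_coordE eqxx.
rewrite (eq_bigr (fun i => (p ord0 i - q ord0 i) ^+ 2)); first by ring.
by move=> i /negbTE ij; rewrite set_coordE ij.
Qed.

Lemma lat_shift c c' a : lat c a c' -> lat c a = lat c' a.
Proof.
move=> hc'; apply/seteqP; split=> p hp j; have [k0 e0] := hc' j; have [k ek] := hp j.
- by exists (k - k0); rewrite intrB ek e0; ring.
- by exists (k0 + k); rewrite intrD ek e0; ring.
Qed.

Lemma vor_latP c a y p : 0 < a -> lat c a y ->
  vor (lat c a) y p <-> forall j, close (a / 2) (p ord0 j) (y ord0 j).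
Proof.
move=> a0 Ly; split=> [hv j | hc z Lz].
- have nearest t : on_line (c ord0 j) a t ->
      (p ord0 j - y ord0 j) ^+ 2 <= (p ord0 j - t) ^+ 2.
    by move=> ht; have := hv _ (lat_set_coord Ly ht); rewrite sqdist_set_coord; lra.
  by apply: sqr_le_neighbours_close => //; apply: nearest;
    [apply: on_lineDr | apply: on_lineBr]; apply: Ly.
- by apply: ler_sum => j _; apply: on_line_close_sqr a0 (Ly j) (Lz j) (hc j).
Qed.

Lemma box_vertex_box a x b : 0 < a -> box_vertex a x b `<=` box a x b.
Proof. by move=> a0 p hp j; apply: seg_vertex_bounds. Qed.

Lemma box_vertex_lat c a x b : lat c a x -> box_vertex a x b `<=` lat c a.
Proof. by move=> hx p hp j; apply: seg_vertex_on_line (hx j) (hp j). Qed.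

Lemma box_lat_vertex c a x b :
  0 < a -> lat c a x -> box a x b `&` lat c a `<=` box_vertex a x b.
Proof. by move=> a0 hx p [hb hp] j; apply: on_line_seg_vertex a0 (hx j) (hp j) (hb j). Qed.

Lemma box_convex a x b : convex_set (box a x b).
Proof.
move=> p q t hp hq /andP [t0 t1] j; rewrite !mxE.
have /andP [p1 p2] := hp j; have /andP [q1 q2] := hq j.
by move: p2 q2; set hi := x ord0 j + _ => p2 q2; apply/andP; split; nra.
Qed.

Lemma convex_set_coord (C : set pt) q j (lo hi : R) : convex_set C -> lo < hi ->
  lo <= q ord0 j <= hi -> C (set_coord q j lo) -> C (set_coord q j hi) -> C q.
Proof.
move=> hC lohi /andP [lo_q q_hi] Clo Chi.
pose t := (q ord0 j - lo) / (hi - lo).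
have -> : q = (1 - t) *: set_coord q j lo + t *: set_coord q j hi.
  by apply/rowP => i; rewrite !mxE; case: eqP => [->|_]; rewrite /t; field;
    rewrite subr_eq0 gt_eqF.
apply: hC => //; apply/andP; split; rewrite /t.
- by apply: divr_ge0; lra.
- by rewrite ler_pdivrMr; lra.
Qed.

Lemma conv_box_vertex a x b : 0 < a -> conv (box_vertex a x b) = box a x b.
Proof.
move=> a0; apply/seteqP; split=> [p hp | q0 hq0 C hC vC].
  by apply: hp; [apply: box_convex | apply: box_vertex_box].
suff ind n q : box a x b q ->
    (forall j : 'I_d, (n <= j)%N -> seg_vertex a (x ord0 j) (b j) (q ord0 j)) -> C q.
  by apply: (ind d) => // j; rewrite leqNgt ltn_ord.
elim: n q => [|n IH] q hq qv; first by apply: vC => j; apply: qv.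
have [nd|dn] := ltnP n d; last by apply: IH => // j nj; exfalso; move: (ltn_ord j); lia.
pose j0 := Ordinal nd.
have IHj0 t : seg_vertex a (x ord0 j0) (b j0) t -> C (set_coord q j0 t).
  move=> ht; apply: IH => [i|i ni]; rewrite set_coordE; case: eqP => [->|ij] //.
  - by apply: seg_vertex_bounds.
  - by apply: qv; move/eqP: ij; rewrite -val_eqE /= => ij; lia.
have /andP [q_lo q_hi] := hq j0.
case bj0: (b j0) q_hi => /= q_hi.
- apply: (convex_set_coord (j := j0) (lo := x ord0 j0) (hi := x ord0 j0 + a) hC).
  + by lra.
  + by rewrite q_lo q_hi.
  + by apply: IHj0; left.
  + by apply: IHj0; right; rewrite bj0.
- have -> : q = set_coord q j0 (x ord0 j0).
    by apply/rowP => i; rewrite set_coordE; case: eqP => [->|]; first lra.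
  by apply: IHj0; left.
Qed.

Lemma box_subset_coord a x x' b b' : 0 < a -> box a x' b' `<=` box a x b ->
  forall j, x ord0 j <= x' ord0 j /\
    x' ord0 j + (if b' j then a else 0) <= x ord0 j + (if b j then a else 0).
Proof.
move=> a0 sub j.
have /(_ j) /andP [lo _] : box a x b x'.
  by apply: sub => i; apply/andP; split => //; case: (b' i); lra.
pose x'' : pt := \row_i (x' ord0 i + (if b' i then a else 0)).
have /(_ j) /andP [_] : box a x b x''.
  by apply: sub => i; rewrite mxE; apply/andP; split => //; case: (b' i); lra.
by rewrite mxE => hi; split.
Qed.

Lemma box_inj_dir a x x' b b' : 0 < a -> box a x b = box a x' b' -> b =1 b'.
Proof.
move=> a0 e j; have [l h] := box_subset_coord a0 (subsetW (esym e)) j.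
have [l' h'] := box_subset_coord a0 (subsetW e) j.
by move: h h'; case: (b j); case: (b' j) => //= h h'; lra.
Qed.

Definition drop_dir b j : 'I_d -> bool := fun i => b i && (i != j).

Lemma bdim_drop_dir b j : b j -> (bdim (drop_dir b j) + 1)%N = bdim b.
Proof.
move=> bj; rewrite /bdim [in RHS](cardD1 j) inE bj addnC; congr (_ + _)%N.
by apply: eq_card => i; rewrite !inE /drop_dir andbC.
Qed.

Lemma box_drop_dir a x b j t : 0 < a -> seg_vertex a (x ord0 j) (b j) t ->
  box a (set_coord x j t) (drop_dir b j) = box a x b `&` [set p | p ord0 j = t].
Proof.
move=> a0 /(seg_vertex_bounds a0) /andP [t_lo t_hi].
apply/seteqP; split=> [p hp | p [hp pj]].
- have /andP [lo hi] := hp j; rewrite set_coordE eqxx /drop_dir eqxx andbF in lo hi.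
  split=> [i|]; last by rewrite /=; lra.
  have := hp i; rewrite set_coordE /drop_dir; case: eqP => [->|_]; last by rewrite andbT.
  by move=> _; apply/andP; split; lra.
- move=> i; rewrite set_coordE /drop_dir; case: eqP => [->|_]; last by rewrite andbT.
  by rewrite andbF pj; apply/andP; split; lra.
Qed.

Lemma box_facet c a x b j t : 0 < a -> lat c a x -> b j ->
  seg_vertex a (x ord0 j) (b j) t ->
  facet_of (lat c a) a (box a (set_coord x j t) (drop_dir b j)) (box a x b).
Proof.
move=> a0 hx bj ht; exists x, b, (set_coord x j t), (drop_dir b j); split=> //.
- by split=> //; apply: lat_set_coord hx (seg_vertex_on_line (hx j) ht).
- by rewrite box_drop_dir //; apply: subIsetl.
- exact: bdim_drop_dir.
Qed.

Definition meets_facets a x b (W : set pt) : Prop :=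
  forall j t, seg_vertex a (x ord0 j) (b j) t -> exists2 v, W v & v ord0 j = t.

Lemma spanned_box_meets_facets c a x b V : 0 < a -> lat c a x -> V `<=` lat c a ->
  spanned (lat c a) a V (box a x b) -> meets_facets a x b (box a x b `&` V).
Proof.
move=> a0 hx VL [[v0 hv0] nofacet] j t ht.
case bj: (b j) ht => ht; last first.
  case: ht => [->|[]//]; exists v0 => //.
  by have /andP := hv0.1 j; rewrite bj addr0; lra.
have [t' ht' other] : exists2 t', seg_vertex a (x ord0 j) (b j) t' &
    forall u, seg_vertex a (x ord0 j) true u -> u = t \/ u = t'.
  rewrite bj; case: ht => [->|[_ ->]].
  - by exists (x ord0 j + a) => [|u [->|[_ ->]]]; [right | left | right].
  - by exists (x ord0 j) => [|u [->|[_ ->]]]; [left | right | left].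
apply: contrapT => none; apply: (nofacet _ (box_facet a0 hx bj ht')).
rewrite box_drop_dir // => v hv; split; first exact: hv.1.
have := box_lat_vertex a0 hx (conj hv.1 (VL _ hv.2)) j; rewrite bj.
by case/other => // vt; exfalso; apply: none; exists v.
Qed.

Lemma meets_facets_spanned_box (G : set pt) a x b V : 0 < a ->
  box a x b `&` V !=set0 -> meets_facets a x b (box a x b `&` V) ->
  spanned G a V (box a x b).
Proof.
move=> a0 ne meets; split=> // F' [x1 [b1 [x2 [b2 [_ e1 -> _ card]]]]] sub.
have [j /andP [b1j b2j]] : exists j, b1 j && ~~ b2 j.
  apply: contrapT => none; suff : (bdim b1 <= bdim b2)%N by move: card; lia.
  apply: subset_leq_card; apply/fintype.subsetP => i; rewrite !inE => b1i.
  by apply/negPn/negP => b2i; apply: none; exists i; rewrite b1i.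
have bj : b j by rewrite (box_inj_dir a0 e1).
have [u hu uj] := meets j _ (or_introl erefl).
have [w hw wj] := meets j _ (or_intror (conj bj erefl)).
have /andP := sub u hu j; have /andP := sub w hw j.
by rewrite (negbTE b2j) addr0 uj wj; lra.
Qed.

End Lattice.

Section Coarsening.
Variables (R : realType) (d : nat) (a : R) (O eps : 'rV[R]_d).
Notation pt := 'rV[R]_d.
Notation fine := (lat O a).
Notation coarse := (lat (O + (a / 2) *: eps) (2 * a)).
Notation coarse_line j := (on_line (O ord0 j + a / 2 * eps ord0 j) (2 * a)).
Notation signs := (forall j, eps ord0 j = 1 \/ eps ord0 j = -1).

Lemma coarseP w : coarse w <-> forall j, coarse_line j (w ord0 j).
Proof. by split=> h j; move: (h j); rewrite !mxE. Qed.

Lemma coarse_near v : 0 < a -> signs -> fine v ->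
  exists2 w, coarse w & forall j, close (a / 2) (v ord0 j) (w ord0 j).
Proof.
move=> a0 he hv.
have /fin_all_exists [w hw] :
    forall j, exists w, coarse_line j w /\ close (a / 2) (v ord0 j) w.
  by move=> j; have [w ? ?] := coarse_exists a0 (he j) (hv j); exists w.
exists (\row_j w j); first by apply/coarseP => j; rewrite mxE; apply: (hw j).1.
by move=> j; rewrite mxE; apply: (hw j).2.
Qed.

Lemma vor_coarseP w v : 0 < a -> coarse w ->
  vor coarse w v <-> forall j, close a (v ord0 j) (w ord0 j).
Proof.
move=> a0 hw; have a2 : 0 < 2 * a by lra.
by have := vor_latP v a2 hw; rewrite mulrAC divff ?mul1r // pnatr_eq0.
Qed.

Lemma active_near_coarse (P : seq pt) v w : 0 < a ->
  active_vertices fine P v -> coarse w -> (forall j, close (a / 2) (v ord0 j) (w ord0 j)) ->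
  active_vertices coarse P w.
Proof.
move=> a0 [hv [p pP vp]] hw near; split=> //; exists p => //.
apply/(vor_coarseP _ a0 hw) => j; have := (vor_latP _ a0 hv).1 vp j.
by case: (near j); rewrite /close; lra.
Qed.

Lemma gface_box x b : 0 < a -> signs -> fine x ->
  exists y b', [/\ coarse y, gface fine coarse (box a x b) = box (2 * a) y b' &
    forall j w, seg_image (O ord0 j) a (eps ord0 j) (x ord0 j) (b j) w <->
                seg_vertex (2 * a) (y ord0 j) (b' j) w].
Proof.
move=> a0 he hx.
have /fin_all_exists [yb hyb] : forall j, exists yb : R * bool, forall w,
    seg_image (O ord0 j) a (eps ord0 j) (x ord0 j) (b j) w <-> seg_vertex (2 * a) yb.1 yb.2 w.
  by move=> j; have [y [b' h]] := seg_image_seg (b j) a0 (he j) (hx j); exists (y, b').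
pose y : pt := \row_j (yb j).1; pose b' j := (yb j).2.
have segE j w : seg_image (O ord0 j) a (eps ord0 j) (x ord0 j) (b j) w <->
    seg_vertex (2 * a) (y ord0 j) (b' j) w by rewrite mxE; apply: hyb.
exists y, b'; split=> //.
  apply/coarseP => j.
  by have /segE [] : seg_vertex (2 * a) (y ord0 j) (b' j) (y ord0 j) by left.
rewrite /gface -[box (2 * a) y b']conv_box_vertex; last by lra.
congr (conv _); apply/seteqP; split=> [w [hw [v [bv fv] vw]] j | w hw].
  apply/segE; split; first by move/coarseP: hw.
  exists (v ord0 j); first exact: (box_lat_vertex a0 hx (conj bv fv)).
  exact: (vor_coarseP _ a0 hw).1 vw j.
have /fin_all_exists [u hu] : forall j, exists u,
    seg_vertex a (x ord0 j) (b j) u /\ close a u (w ord0 j).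
  by move=> j; have /segE [_ [u ? ?]] := hw j; exists u.
have wc : coarse w by apply/coarseP => j; have /segE [] := hw j.
have uv : box_vertex a x b (\row_j u j) by move=> j; rewrite mxE; apply: (hu j).1.
split=> //; exists (\row_j u j).
  by split; [apply: box_vertex_box | apply: box_vertex_lat hx _ uv].
by apply/(vor_coarseP _ a0 wc) => j; rewrite mxE; apply: (hu j).2.
Qed.

Lemma gface_active (P : seq pt) f : 0 < a -> signs ->
  active_face fine a P f -> active_face coarse (2 * a) P (gface fine coarse f).
Proof.
move=> a0 he [[x [b [hx ->]]] span].
have [y [b' [hy -> segE]]] := gface_box b a0 he hx.
have meets := spanned_box_meets_facets a0 hx (fun v (av : active_vertices fine P v) => av.1) span.
have image_vertex v : (box a x b `&` active_vertices fine P) v ->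
    exists2 w, (box (2 * a) y b' `&` active_vertices coarse P) w &
      forall j, close a (v ord0 j) (w ord0 j).
  move=> [bv av]; have [w hw near] := coarse_near a0 he av.1.
  have far j : close a (v ord0 j) (w ord0 j) by case: (near j); split; lra.
  exists w => //; split; last exact: active_near_coarse a0 av hw near.
  apply: box_vertex_box; first lra.
  move=> j; apply/segE; split; first by move/coarseP: hw.
  by exists (v ord0 j); first apply: (box_lat_vertex a0 hx (conj bv av.1)).
split; first by exists y, b'.
apply: meets_facets_spanned_box; first lra.
  by have [[v hv] _] := span; have [w hw _] := image_vertex v hv; exists w.
move=> j t /segE [tc [u hu ut]].
have [v hv vj] := meets j u hu; have [w hw vw] := image_vertex v hv.
exists w => //; rewrite -vj in ut.
have wc : coarse_line j (w ord0 j) by move/coarseP: hw.2.1.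
exact: coarse_unique a0 (he j) (hv.2.1 j) tc wc ut (vw j).
Qed.

End Coarsening.

Section Grids.
Variables (R : realType) (d : nat).
Notation pt := 'rV[R]_d.

Lemma alphaS (lam : R) s : alpha lam (s + 1) = 2 * alpha lam s.
Proof. by rewrite /alpha exprzDr ?unitfE ?pnatr_eq0 // expr1z; ring. Qed.

Lemma alpha_gt0 (lam : R) s : 0 < lam -> 0 < alpha lam s.
Proof. by move=> lam0; apply: mulr_gt0 => //; apply: exprz_gt0; lra. Qed.

Lemma step_image_lat (G : set pt) a O eps : G = lat O a ->
  [set 2%:R *: (x - O) + O + (a / 2%:R) *: eps | x in G] = lat (O + (a / 2) *: eps) (2 * a).
Proof.
move=> ->; apply/seteqP; split=> [w [x hx <-] j | w hw].
  by have [k ek] := hx j; exists k; rewrite !mxE ek; ring.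
exists (2%:R^-1 *: (w - O - (a / 2) *: eps) + O).
  by move=> j; have [k] := hw j; rewrite !mxE => ->; exists k; field.
by apply/rowP => j; rewrite !mxE; field.
Qed.

Lemma step_preimage_lat (G : set pt) a O eps c :
  [set 2%:R *: (x - O) + O + (a / 2%:R) *: eps | x in G] = lat c (2 * a) ->
  G = lat (2%:R^-1 *: (c + O - (a / 2) *: eps)) a.
Proof.
set f := fun x : pt => _; move=> e; apply/seteqP; split=> [x hx j | x hx].
  have /(_ j) [k] : lat c (2 * a) (f x) by rewrite -e; exists x.
  by rewrite !mxE => ek; exists k; lra.
have : lat c (2 * a) (f x).
  by move=> j; have [k] := hx j; rewrite !mxE => ->; exists k; field.
rewrite -e => -[x' hx' fx']; suff -> : x = x' by [].
apply/rowP => j; have := congr1 (fun m : pt => m ord0 j) fx'; rewrite /f /= !mxE; lra.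
Qed.

Lemma grid_step_lat (G G' : set pt) a c : grid_step G G' a -> G = lat c a ->
  exists O eps : pt, [/\ forall j, eps ord0 j = 1 \/ eps ord0 j = -1,
    G = lat O a & G' = lat (O + (a / 2) *: eps) (2 * a)].
Proof.
move=> [O [eps [GO he ->]]] Gc.
have GO' : G = lat O a by rewrite Gc; apply: lat_shift; rewrite -Gc.
by exists O, eps; split=> //; apply: step_image_lat.
Qed.

Lemma grids_lat (lam : R) (G : int -> set pt) : G 0 = lattice lam ->
  (forall s, grid_step (G s) (G (s + 1)) (alpha lam s)) ->
  forall s, exists c, G s = lat c (alpha lam s).
Proof.
move=> G0 steps.
pose is_lat s := exists c, G s = lat c (alpha lam s).
have up s : is_lat s -> is_lat (s + 1).
  move=> [c Gs]; have [O [eps [_ _ e]]] := grid_step_lat (steps s) Gs.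
  by rewrite /is_lat e alphaS; eexists.
have down s : is_lat (s + 1) -> is_lat s.
  move=> [c Gs]; have [O [eps [_ _ e]]] := steps s.
  by rewrite alphaS e in Gs; eexists; apply: step_preimage_lat Gs.
suff H (n : nat) : is_lat n /\ is_lat (- n%:Z).
  by case=> n; [apply: (H n).1 | rewrite NegzE; apply: (H n.+1).2].
elim: n => [|n [IHpos IHneg]].
  suff h0 : is_lat 0 by rewrite oppr0.
  exists 0; rewrite G0 /alpha expr0z mulr1; apply/seteqP; split=> p hp j;
    by have [k ek] := hp j; exists k; rewrite ek !mxE; ring.
split.
  have -> : n.+1 = n%:Z + 1 :> int by lia.
  exact: up.
apply: down; have -> : - n.+1%:Z + 1 = - n%:Z by lia.
exact: IHneg.
Qed.

End Grids.

Theorem lemma7 (R : realType) (d : nat) (lam : R) (G : int -> set 'rV[R]_d)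
  (P : seq 'rV[R]_d) :
  (0 < d)%N -> 0 < lam ->
  G 0 = lattice lam ->
  (forall s : int, grid_step (G s) (G (s + 1)) (alpha lam s)) ->
  (forall (s : int) p y1 y2, p \in P -> G s y1 -> G s y2 ->
      vor (G s) y1 p -> vor (G s) y2 p -> y1 = y2) ->
  forall (s : int) (f : set 'rV[R]_d),
    active_face (G s) (alpha lam s) P f ->
    active_face (G (s + 1)) (alpha lam (s + 1)) P (gface (G s) (G (s + 1)) f).
Proof.
move=> _ lam0 G0 steps _ s f.
have [c Gs] := grids_lat G0 steps s.
have [O [eps [signs -> ->]]] := grid_step_lat (steps s) Gs.
by rewrite alphaS; apply: gface_active (alpha_gt0 s lam0) signs.
Qed.
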